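(* Let $T$ be a finitary monad on $\mathbf{Set}$. Then the locales $\mathrm{LB}_0T$ and $\mathrm{LB}_1T$ are spatial.
   Context: A monad $T$ on $\mathbf{Set}$: sets $TA$, $\mathrm{return}\,a\in TA$, $\mathbin{\gg\!=}\colon TA\times(TB)^A\to TB$ with the monad laws; $t\gg s:=t\mathbin{\gg\!=}\lambda a.s$. $T$ is finitary if every $t\in TA$ is $t'\mathbin{\gg\!=}\lambda i.\mathrm{return}\,f(i)$ for some finite $I$, $t'\in TI$, $f\colon I\to A$; in particular $T$ has rank $\kappa=\omega$. $1=\{*\}$, $2=\{0,1\}$. $\mathrm{LB}_0T$: frame presented by generators $[b]$ ($b\in T2$) subject to $[t\mapsto a]\wedge[t\mapsto a']=\bot$ ($a\ne a'$), $[t\gg\mathrm{return}\,a\mapsto a]=\top$, $[t\mathbin{\gg\!=}u\mapsto b]=\bigvee_a[t\mapsto a]\wedge[t\gg u(a)\mapsto b]$ for all sets $A,B$, $t\in TA$, $u\colon A\to TB$, $b\in B$, with $[t\mapsto a]:=[t\mathbin{\gg\!=}\lambda a'.\mathrm{return}(\delta_a(a'))]$, $\delta_a(a')=1$ iff $a'=a$. Trace equivalence: $[\![m\sim_1m']\!]=\bigvee\{[t\mapsto a]: |A|\le\kappa, t\in TA, u,u'\colon A\to T1, u(a)=u'(a), m=t\mathbin{\gg\!=}u, m'=t\mathbin{\gg\!=}u'\}$; $[\![m\sim m']\!]$ is the join over $k\ge1$ and $m=m_1,\ldots,m_k=m'$ of $\bigwedge_{i<k}[\![m_i\sim_1m_{i+1}]\!]$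 (with $[\![m\sim_1 m']\!]$ itself for $k=1$); for complemented $b$, $m\sim_bm'$ iff $b\le[\![m\sim m']\!]$. $\mathrm{LB}_1T$ has frame the pointwise-ordered set of functions $w\colon T1\to\mathcal{O}(\mathrm{LB}_0T)$ with $b\wedge w(m_1)=b\wedge w(m_2)$ whenever $b$ complemented and $m_1\sim_bm_2$. A locale $L$ is spatial if the map $u\mapsto\{x\in\mathrm{pt}(L): x^{-1}(u)=\top\}$ from $\mathcal{O}(L)$ to the opens of its space of points is injective (equivalently an isomorphism), where points are frame maps $\mathcal{O}(L)\to\{\bot,\top\}$. *)

From Stdlib Require Import List ClassicalDescription FunctionalExtensionality ProofIrrelevance.
Set Implicit Arguments.

Record monad := Monad {
  mT :> Type -> Type;
  ret : forall A, A -> mT A;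
  bind : forall A B, mT A -> (A -> mT B) -> mT B;
  bind_ret_l : forall A B (a : A) (f : A -> mT B), bind (ret a) f = f a;
  bind_ret_r : forall A (t : mT A), bind t (@ret A) = t;
  bind_assoc : forall A B C (t : mT A) (f : A -> mT B) (g : B -> mT C),
      bind (bind t f) g = bind t (fun a => bind (f a) g)
}.
Arguments ret {m A}.
Arguments bind {m A B}.

Definition seqm (T : monad) A B (t : T A) (s : T B) : T B := bind t (fun _ => s).
Arguments seqm {T A B}.

(** finitary: every t is t' >>= (return o f) for some finite I (here I = {0,..,n-1}) *)
Definition finitary (T : monad) : Prop :=
  forall (A : Type) (t : T A), exists (n : nat) (t' : T {i : nat | i < n})
    (f : {i : nat | i < n} -> A), t = bind t' (fun i => ret (f i)).

Record frame := Frame {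
  fcar :> Type;
  fle : fcar -> fcar -> Prop;
  fmeet : fcar -> fcar -> fcar;
  ftop : fcar;
  fsup : (fcar -> Prop) -> fcar;
  fle_refl : forall x, fle x x;
  fle_trans : forall x y z, fle x y -> fle y z -> fle x z;
  fle_antisym : forall x y, fle x y -> fle y x -> x = y;
  fmeet_spec : forall x a b, fle x (fmeet a b) <-> (fle x a /\ fle x b);
  ftop_spec : forall x, fle x ftop;
  fsup_spec : forall (S : fcar -> Prop) x, fle (fsup S) x <-> (forall s, S s -> fle s x);
  fdistr : forall a (S : fcar -> Prop),
      fle (fmeet a (fsup S)) (fsup (fun y => exists s, S s /\ y = fmeet a s))
}.
Arguments fle {f}. Arguments fmeet {f}. Arguments ftop {f}. Arguments fsup {f}.

Definition fbot (L : frame) : L := fsup (fun _ => False).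
Definition fjoin (L : frame) (a b : L) : L := fsup (fun x => x = a \/ x = b).
Arguments fjoin {L}.
Definition complemented (L : frame) (b : L) : Prop :=
  exists c, fmeet b c = fbot L /\ fjoin b c = ftop.

Arguments complemented {L}.
Definition frame_hom (L M : frame) (phi : L -> M) : Prop :=
  phi ftop = ftop /\ (forall a b, phi (fmeet a b) = fmeet (phi a) (phi b)) /\
  (forall S : L -> Prop, phi (fsup S) = fsup (fun y => exists x, S x /\ y = phi x)).
Arguments frame_hom {L M}.

(** points: frame maps into the two-element frame {bot, top} (= bool) *)
Definition is_point (L : frame) (p : L -> bool) : Prop :=
  p ftop = true /\ (forall a b, p (fmeet a b) = andb (p a) (p b)) /\
  (forall S : L -> Prop, p (fsup S) = true <-> exists s, S s /\ p s = true).

Arguments is_point {L}.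
Definition spatial (L : frame) : Prop :=
  forall u v : L, (forall p : L -> bool, is_point p -> (p u = true <-> p v = true)) -> u = v.

Definition delta (A : Type) (a a' : A) : bool :=
  if excluded_middle_informative (a' = a) then true else false.

Definition mapsto (T : monad) A (t : T A) (a : A) : T bool :=
  bind t (fun a' => ret (delta a a')).
Arguments mapsto {T A}.

Definition LB0_relations (T : monad) (L : frame) (h : T bool -> L) : Prop :=
  (forall (A : Type) (t : T A) (a a' : A), a <> a' ->
      fmeet (h (mapsto t a)) (h (mapsto t a')) = fbot L) /\
  (forall (A B : Type) (t : T A) (a : B), h (mapsto (seqm t (ret a)) a) = ftop) /\
  (forall (A B : Type) (t : T A) (u : A -> T B) (b : B),
      h (mapsto (bind t u) b) =
      fsup (fun x => exists a : A, x = fmeet (h (mapsto t a)) (h (mapsto (seqm t (u a)) b)))).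
Arguments LB0_relations {T L}.

(** (F, g) is the frame presented by generators [b] (b : T 2) and the relations above *)
Definition is_LB0 (T : monad) (F : frame) (g : T bool -> F) : Prop :=
  LB0_relations g /\
  forall (L : frame) (h : T bool -> L), LB0_relations h ->
    exists phi : F -> L, frame_hom phi /\ (forall b, phi (g b) = h b) /\
      forall psi : F -> L, frame_hom psi -> (forall b, psi (g b) = h b) ->
        forall x, psi x = phi x.
Arguments is_LB0 {T F}.

(** * Trace equivalence (kappa = omega: |A| <= omega means A injects into nat) *)
Definition sim1 (T : monad) (F : frame) (g : T bool -> F) (m m' : T unit) : F :=
  fsup (fun x => exists (A : Type) (enc : A -> nat),
          (forall a1 a2, enc a1 = enc a2 -> a1 = a2) /\
          exists (t : T A) (u u' : A -> T unit) (a : A),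
            u a = u' a /\ m = bind t u /\ m' = bind t u' /\ x = g (mapsto t a)).
Arguments sim1 {T F}.

Fixpoint chain_meet {T : monad} {F : frame} (g : T bool -> F) (x : T unit) (l : list (T unit)) : F :=
  match l with
  | nil => ftop
  | y :: l' => fmeet (sim1 g x y) (chain_meet g y l')
  end.

Fixpoint lastl {A : Type} (x : A) (l : list A) : A :=
  match l with nil => x | y :: l' => lastl y l' end.

(** chains m = m_1, ..., m_k = m' with k >= 1: the chain is m :: l with k = 1 + length l;
    for k = 1 the term is [[m ~1 m']] itself *)
Definition chain_val (T : monad) (F : frame) (g : T bool -> F) (m m' : T unit) (l : list (T unit)) : F :=
  match l with nil => sim1 g m m' | _ => chain_meet g m l end.
Arguments chain_val {T F}.

Definition sim (T : monad) (F : frame) (g : T bool -> F) (m m' : T unit) : F :=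
  fsup (fun x => exists l : list (T unit), lastl m l = m' /\ x = chain_val g m m' l).
Arguments sim {T F}.

Definition sim_b (T : monad) (F : frame) (g : T bool -> F) (b : F) (m m' : T unit) : Prop :=
  fle b (sim g m m').
Arguments sim_b {T F}.

Section LB1.
Variables (T : monad) (F : frame) (g : T bool -> F).

Definition LB1_ok (w : T unit -> F) : Prop :=
  forall b : F, complemented b -> forall m1 m2, sim_b g b m1 m2 ->
    fmeet b (w m1) = fmeet b (w m2).

Definition LB1car := {w : T unit -> F | LB1_ok w}.

Lemma fle_meetl (a b : F) : fle (fmeet a b) a.
Proof. apply (proj1 (fmeet_spec _ _ _ _) (fle_refl _ _)). Qed.
Lemma fle_meetr (a b : F) : fle (fmeet a b) b.
Proof. apply (proj1 (fmeet_spec _ _ _ _) (fle_refl _ _)). Qed.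

Lemma meet_distr_meet (b x y : F) : fmeet b (fmeet x y) = fmeet (fmeet b x) (fmeet b y).
Proof.
  apply fle_antisym.
  - apply fmeet_spec; split; apply fmeet_spec; split; try apply fle_meetl.
    + eapply fle_trans; [apply fle_meetr|apply fle_meetl].
    + eapply fle_trans; [apply fle_meetr|apply fle_meetr].
  - apply fmeet_spec; split.
    + eapply fle_trans; [apply fle_meetl|apply fle_meetl].
    + apply fmeet_spec; split.
      * eapply fle_trans; [apply fle_meetl|apply fle_meetr].
      * eapply fle_trans; [apply fle_meetr|apply fle_meetr].
Qed.

Lemma meet_sup (a : F) (S : F -> Prop) :
  fmeet a (fsup S) = fsup (fun y => exists s, S s /\ y = fmeet a s).
Proof.
  apply fle_antisym; [apply fdistr|].
  apply fsup_spec; intros y [s [Hs ->]]; apply fmeet_spec; split; [apply fle_meetl|].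
  eapply fle_trans; [apply fle_meetr|]. apply (proj1 (fsup_spec _ _ _) (fle_refl _ _)); exact Hs.
Qed.

Lemma sup_ext (S S' : F -> Prop) : (forall x, S x <-> S' x) -> fsup S = fsup S'.
Proof.
  intros H; apply fle_antisym; apply fsup_spec; intros s Hs;
  apply (proj1 (fsup_spec _ _ _) (fle_refl _ _)); apply H; exact Hs.
Qed.

Definition LB1le (w w' : LB1car) : Prop := forall m, fle (proj1_sig w m) (proj1_sig w' m).

Lemma LB1_meet_ok (w w' : LB1car) : LB1_ok (fun m => fmeet (proj1_sig w m) (proj1_sig w' m)).
Proof.
  destruct w as [w Hw], w' as [w' Hw']; intros b Hb m1 m2 H; simpl.
  rewrite (meet_distr_meet b (w m1)), (meet_distr_meet b (w m2)), (Hw b Hb m1 m2 H), (Hw' b Hb m1 m2 H); reflexivity.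
Qed.
Definition LB1meet (w w' : LB1car) : LB1car := exist _ _ (LB1_meet_ok w w').

Lemma LB1_top_ok : LB1_ok (fun _ => ftop).
Proof. intros b _ m1 m2 _; reflexivity. Qed.
Definition LB1top : LB1car := exist _ _ LB1_top_ok.

Lemma LB1_sup_ok (S : LB1car -> Prop) :
  LB1_ok (fun m => fsup (fun y => exists w, S w /\ y = proj1_sig w m)).
Proof.
  intros b Hb m1 m2 H; simpl; rewrite !meet_sup; apply sup_ext; intros x; split;
  intros [s [[w [Hw ->]] ->]]; destruct w as [w Hok]; simpl.
  - exists (w m2); split; [exists (exist _ w Hok); auto|]. apply Hok; auto.
  - exists (w m1); split; [exists (exist _ w Hok); auto|]. symmetry; apply Hok; auto.
Qed.
Definition LB1sup (S : LB1car -> Prop) : LB1car := exist _ _ (LB1_sup_ok S).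

Lemma LB1_eq (w w' : LB1car) : (forall m, proj1_sig w m = proj1_sig w' m) -> w = w'.
Proof.
  destruct w as [w Hw], w' as [w' Hw']; simpl; intros H.
  assert (w = w') by (apply functional_extensionality; exact H); subst.
  f_equal; apply proof_irrelevance.
Qed.

Definition LB1 : frame.
Proof.
  refine (@Frame LB1car LB1le LB1meet LB1top LB1sup _ _ _ _ _ _ _).
  - intros x m; apply fle_refl.
  - intros x y z H1 H2 m; eapply fle_trans; eauto.
  - intros x y H1 H2; apply LB1_eq; intros m; apply fle_antisym; auto.
  - intros x a b; unfold LB1le; simpl; split.
    + intros H; split; intros m; apply (proj1 (fmeet_spec _ _ _ _) (H m)).
    + intros [H1 H2] m; apply fmeet_spec; auto.
  - intros x m; apply ftop_spec.
  - intros S x; unfold LB1le; simpl; split.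
    + intros H s Hs m; eapply fle_trans; [|apply H].
      apply (proj1 (fsup_spec _ _ _) (fle_refl _ _)); exists s; auto.
    + intros H m; apply fsup_spec; intros y [w [Hw ->]]; apply H; auto.
  - intros a S m; simpl; rewrite meet_sup; apply fsup_spec; intros y [s [[w [Hw ->]] ->]].
    apply (proj1 (fsup_spec _ _ _) (fle_refl _ _)).
    exists (LB1meet a w); split; [exists w; auto|]. reflexivity.
Defined.
End LB1.
Arguments LB1 {T F}.

(* By the universal property of the presentation, every element of LB_0 T is a join of
   finite meets of generators.  If u is not below v, some such finite meet d <= u is not
   below v, and Zorn's lemma gives a prime filter containing d but not v.  Its indicator on
   generators respects the defining relations: the only infinitary one, for [t >>= u |-> b],
   collapses to a finite join because T is finitary, and a prime filter contains a finite
   join only if it contains one of its terms.  Hence it extends to a point separating u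
   from v.  Evaluation at each m : T 1 is a frame map LB_1 T -> LB_0 T and these maps are
   jointly injective, so LB_1 T is spatial as well. *)

From Stdlib Require Import Classical ClassicalDescription ProofIrrelevance.
From Stdlib Require Import FunctionalExtensionality List Lia.
From mathcomp Require classical_sets.

Set Implicit Arguments.
Unset Strict Implicit.

Lemma zorn_sets (X : Type) (P : (X -> Prop) -> Prop) :
  (forall C : (X -> Prop) -> Prop, (forall Y, C Y -> P Y) ->
     (forall Y Z, C Y -> C Z -> (forall x, Y x -> Z x) \/ (forall x, Z x -> Y x)) ->
     P (fun x => exists2 Y, C Y & Y x)) ->
  exists A, P A /\ forall B, (forall x, A x -> B x) -> P B -> forall x, B x -> A x.
Proof.
  intros Hchain.
  destruct (@classical_sets.Zorn_bigcup X P) as [A [PA Amax]].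
  - intros C CP Ctot; apply Hchain; [exact CP | exact Ctot].
  - exists A; split; [exact PA |]. intros B AB PB x Bx.
    apply NNPP; intros nAx. apply (Amax B); [| exact PB].
    split; [exact AB |]. intros BA; exact (nAx (BA x Bx)).
Qed.

Lemma bind_map_ret (T : monad) (I A B : Type) (t : T I) (f : I -> A) (u : A -> T B) :
  bind (bind t (fun i => ret (f i))) u = bind t (fun i => u (f i)).
Proof.
  rewrite bind_assoc; f_equal.
  apply functional_extensionality; intros i; apply bind_ret_l.
Qed.

Section FrameLemmas.
Variable L : frame.
Implicit Types a b c d x y : L.

Lemma le_sup (S : L -> Prop) x : S x -> fle x (fsup S).
Proof. intros Sx; exact (proj1 (fsup_spec L S _) (fle_refl _ _) x Sx). Qed.

Lemma sup_le (S : L -> Prop) x : (forall s, S s -> fle s x) -> fle (fsup S) x.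
Proof. apply fsup_spec. Qed.

Lemma le_meet x a b : fle x a -> fle x b -> fle x (fmeet a b).
Proof. intros; apply fmeet_spec; auto. Qed.

Lemma meet_mono a b c d : fle a c -> fle b d -> fle (fmeet a b) (fmeet c d).
Proof.
  intros Hac Hbd; apply le_meet.
  - eapply fle_trans; [apply fle_meetl | exact Hac].
  - eapply fle_trans; [apply fle_meetr | exact Hbd].
Qed.

Lemma meetC a b : fmeet a b = fmeet b a.
Proof. apply fle_antisym; apply le_meet; apply fle_meetl || apply fle_meetr. Qed.

Lemma meetA a b c : fmeet a (fmeet b c) = fmeet (fmeet a b) c.
Proof.
  apply fle_antisym; repeat apply le_meet;
    solve [apply fle_meetl | apply fle_meetr
          | eapply fle_trans; [apply fle_meetl | apply fle_meetl]
          | eapply fle_trans; [apply fle_meetl | apply fle_meetr]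
          | eapply fle_trans; [apply fle_meetr | apply fle_meetl]
          | eapply fle_trans; [apply fle_meetr | apply fle_meetr]].
Qed.

Lemma meet_of_le a b : fle a b -> fmeet a b = a.
Proof. intros; apply fle_antisym; [apply fle_meetl | apply le_meet; auto using fle_refl]. Qed.

Lemma bot_le x : fle (fbot L) x.
Proof. apply sup_le; intros s []. Qed.

Lemma meet_join_le a x y : fle (fmeet a (fjoin x y)) (fjoin (fmeet a x) (fmeet a y)).
Proof.
  unfold fjoin; rewrite meet_sup; apply sup_le; intros z [s [[-> | ->] ->]]; apply le_sup; auto.
Qed.

Fixpoint meets (l : list L) : L :=
  match l with nil => ftop | x :: l' => fmeet x (meets l') end.

Lemma meets_app l1 l2 : meets (l1 ++ l2) = fmeet (meets l1) (meets l2).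
Proof.
  induction l1 as [| x l1 IH]; simpl.
  - rewrite meetC; symmetry; apply meet_of_le, ftop_spec.
  - rewrite IH; apply meetA.
Qed.

End FrameLemmas.
Arguments meets {L}.

Section Homomorphisms.
Variables L M N : frame.

Lemma frame_hom_id : frame_hom (fun x : L => x).
Proof.
  split; [reflexivity | split; [reflexivity |]].
  intros S; apply sup_ext; intros x; split.
  - intros Sx; exists x; auto.
  - intros [y [Sy ->]]; exact Sy.
Qed.

Lemma frame_hom_comp (phi : L -> M) (psi : M -> N) :
  frame_hom phi -> frame_hom psi -> frame_hom (fun x => psi (phi x)).
Proof.
  intros [Pt [Pm Ps]] [Qt [Qm Qs]]; split; [rewrite Pt; exact Qt | split].
  - intros a b; rewrite Pm; apply Qm.
  - intros S; rewrite Ps, Qs; apply sup_ext; intros z; split.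
    + intros [y [[x [Sx ->]] ->]]; eauto.
    + intros [x [Sx ->]]; eauto.
Qed.

Lemma frame_hom_bot (phi : L -> M) : frame_hom phi -> phi (fbot L) = fbot M.
Proof.
  intros [_ [_ Ps]]; unfold fbot; rewrite Ps.
  apply sup_ext; intros y; split; [intros [x [[] _]] | intros []].
Qed.

End Homomorphisms.

Section Points.
Variable L : frame.

Lemma point_mono (p : L -> bool) x y : is_point p -> fle x y -> p x = true -> p y = true.
Proof.
  intros [_ [Pm _]] Hxy Px; rewrite <- (meet_of_le Hxy), Pm in Px.
  apply andb_prop in Px; apply Px.
Qed.

Lemma point_meets (p : L -> bool) l :
  is_point p -> p (meets l) = true <-> forall x, In x l -> p x = true.
Proof.
  intros Pp; induction l as [| x l IH]; simpl.
  - split; [intros _ _ [] | intros _; apply Pp].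
  - destruct Pp as [_ [Pm _]]; rewrite Pm, Bool.andb_true_iff, IH.
    split; [intros [Px Pl] y [<- | Hy]; auto | intros H; split; auto].
Qed.

Lemma is_point_comp (M : frame) (phi : L -> M) (p : M -> bool) :
  frame_hom phi -> is_point p -> is_point (fun x => p (phi x)).
Proof.
  intros [Ht [Hm Hs]] [Pt [Pm Ps]]; split; [rewrite Ht; exact Pt | split].
  - intros a b; rewrite Hm; apply Pm.
  - intros S; rewrite Hs, Ps; split.
    + intros [y [[x [Sx ->]] Py]]; eauto.
    + intros [x [Sx Px]]; eauto.
Qed.

Lemma spatial_of_hom_family (I : Type) (M : I -> frame) (phi : forall i, L -> M i) :
  (forall i, frame_hom (phi i)) -> (forall x y, (forall i, phi i x = phi i y) -> x = y) ->
  (forall i, spatial (M i)) -> spatial L.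
Proof.
  intros Hhom Hinj Hsp u v Huv; apply Hinj; intros i; apply Hsp; intros p Pp.
  exact (Huv _ (is_point_comp (Hhom i) Pp)).
Qed.

End Points.

Definition indicator (X : Type) (A : X -> Prop) (x : X) : bool :=
  if excluded_middle_informative (A x) then true else false.

Lemma indicator_true (X : Type) (A : X -> Prop) x : indicator A x = true <-> A x.
Proof. unfold indicator; destruct excluded_middle_informative; intuition discriminate. Qed.

Definition bool_frame : frame.
Proof.
  refine (@Frame bool (fun a b => a = true -> b = true) andb true (indicator (fun S => S true))
            _ _ _ _ _ _ _).
  - auto.
  - auto.
  - intros [] [] H1 H2; auto; symmetry; auto.
  - intros x a b; rewrite Bool.andb_true_iff; intuition.
  - auto.
  - intros S x; rewrite indicator_true; split.
    + intros H [] Sb; auto; discriminate.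
    + intros H St; exact (H true St eq_refl).
  - intros a S; rewrite Bool.andb_true_iff, !indicator_true; intros [-> Sb].
    exists true; auto.
Defined.

Lemma bool_frame_sup_true (S : bool_frame -> Prop) : fsup S = true <-> S true.
Proof. apply indicator_true. Qed.

Lemma bool_frame_meet_true (a b : bool_frame) : fmeet a b = true <-> a = true /\ b = true.
Proof. apply Bool.andb_true_iff. Qed.

Lemma bool_frame_bot : fbot bool_frame = false.
Proof. apply Bool.not_true_iff_false; unfold fbot; rewrite bool_frame_sup_true; auto. Qed.

Lemma is_point_of_hom (L : frame) (p : L -> bool_frame) : frame_hom p -> is_point p.
Proof.
  intros [Ht [Hm Hs]]; split; [exact Ht | split; [exact Hm |]].
  intros S; rewrite Hs, bool_frame_sup_true; split.
  - intros [x [Sx Px]]; eauto.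
  - intros [x [Sx Px]]; eauto.
Qed.

Section Subframe.
Variables (L : frame) (P : L -> Prop).
Hypothesis P_top : P ftop.
Hypothesis P_meet : forall a b, P a -> P b -> P (fmeet a b).
Hypothesis P_sup : forall S, (forall s, S s -> P s) -> P (fsup S).

Definition sub_meet (x y : {a | P a}) : {a | P a} :=
  exist _ _ (P_meet (proj2_sig x) (proj2_sig y)).

Lemma sub_sup_closed (S : {a | P a} -> Prop) :
  P (fsup (fun y => exists s, S s /\ y = proj1_sig s)).
Proof. apply P_sup; intros y [s [_ ->]]; apply proj2_sig. Qed.

Definition sub_sup (S : {a | P a} -> Prop) : {a | P a} := exist _ _ (sub_sup_closed S).

Lemma sub_val_inj (x y : {a | P a}) : proj1_sig x = proj1_sig y -> x = y.
Proof.
  destruct x as [x Px], y as [y Py]; simpl; intros ->; f_equal; apply proof_irrelevance.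
Qed.

Definition subframe : frame.
Proof.
  refine (@Frame {a | P a} (fun x y => fle (proj1_sig x) (proj1_sig y)) sub_meet
            (exist _ _ P_top) sub_sup _ _ _ _ _ _ _); simpl.
  - intros; apply fle_refl.
  - intros x y z; apply fle_trans.
  - intros x y Hxy Hyx; apply sub_val_inj, fle_antisym; auto.
  - intros x a b; apply fmeet_spec.
  - intros; apply ftop_spec.
  - intros S x; split.
    + intros H s Ss; refine (fle_trans _ _ _ _ _ H); apply le_sup; exists s; auto.
    + intros H; apply sup_le; intros y [s [Ss ->]]; auto.
  - intros a S; rewrite meet_sup; apply sup_le; intros y [s [[s' [Ss' ->]] ->]].
    apply le_sup; exists (sub_meet a s'); split; [eauto | reflexivity].
Defined.

Lemma subframe_val_hom : frame_hom (fun x : subframe => proj1_sig x).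
Proof. split; [reflexivity | split; [reflexivity | intros S; reflexivity]]. Qed.

End Subframe.

Section Presentation.
Variable T : monad.

Lemma LB0_relations_reflect (L M : frame) (e : M -> L) (h : T bool -> M) :
  frame_hom e -> (forall x y, e x = e y -> x = y) ->
  LB0_relations (fun b => e (h b)) -> LB0_relations h.
Proof.
  intros He Hinj [R1 [R2 R3]]; pose proof He as [Et [Em Es]]; split; [| split].
  - intros A t a a' Hne; apply Hinj; rewrite Em, (frame_hom_bot He); auto.
  - intros A B t a; apply Hinj; rewrite Et; auto.
  - intros A B t u b; apply Hinj; rewrite R3, Es; apply sup_ext; intros y; split.
    + intros [a ->]; eexists; split; [exists a; reflexivity | symmetry; apply Em].
    + intros [x [[a ->] ->]]; exists a; apply Em.
Qed.

Lemma LB0_endo_id (F : frame) (g : T bool -> F) (phi : F -> F) :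
  is_LB0 g -> frame_hom phi -> (forall b, phi (g b) = g b) -> forall x, phi x = x.
Proof.
  intros [Hr Hu] Hphi Hfix x.
  destruct (Hu F g Hr) as [phi0 [_ [_ Huniq]]].
  rewrite (Huniq phi Hphi Hfix), (Huniq (fun y => y) (frame_hom_id F) (fun _ => eq_refl)).
  reflexivity.
Qed.

Lemma LB0_ind (F : frame) (g : T bool -> F) (P : F -> Prop) :
  is_LB0 g -> P ftop -> (forall a b, P a -> P b -> P (fmeet a b)) ->
  (forall S, (forall s, S s -> P s) -> P (fsup S)) ->
  (forall b, P (g b)) -> forall x, P x.
Proof.
  intros HL Ptop Pmeet Psup Pgen x.
  set (G := subframe Ptop Pmeet Psup).
  set (gG := fun b => exist P (g b) (Pgen b) : G).
  assert (HrG : LB0_relations gG).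
  { apply (LB0_relations_reflect (subframe_val_hom Ptop Pmeet Psup)).
    - apply sub_val_inj.
    - exact (proj1 HL). }
  destruct (proj2 HL G gG HrG) as [phi [Hphi [Hphig _]]].
  rewrite <- (LB0_endo_id HL (frame_hom_comp Hphi (subframe_val_hom Ptop Pmeet Psup))
               (fun b => f_equal (@proj1_sig _ _) (Hphig b)) x).
  apply proj2_sig.
Qed.

End Presentation.

Section Basics.
Variables (T : monad) (F : frame) (g : T bool -> F).

Definition basic (d : F) : Prop := exists l, d = meets (map g l).

Definition basic_cover (x : F) : Prop := fle x (fsup (fun d => basic d /\ fle d x)).

Lemma basic_cover_top : basic_cover ftop.
Proof. apply le_sup; split; [exists nil; reflexivity | apply fle_refl]. Qed.

Lemma basic_cover_gen b : basic_cover (g b).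
Proof.
  eapply fle_trans; [| apply le_sup; split; [exists (b :: nil); reflexivity | apply fle_meetl]].
  apply le_meet; [apply fle_refl | apply ftop_spec].
Qed.

Lemma basic_cover_meet x y : basic_cover x -> basic_cover y -> basic_cover (fmeet x y).
Proof.
  intros Hx Hy; eapply fle_trans; [apply meet_mono; [exact Hx | exact Hy] |].
  rewrite meet_sup; apply sup_le; intros z [d [[[l ->] Hd] ->]].
  rewrite meetC, meet_sup; apply sup_le; intros z [e [[[k ->] He] ->]].
  apply le_sup; split.
  - exists (l ++ k); rewrite map_app, meets_app; reflexivity.
  - rewrite meetC; apply meet_mono; auto.
Qed.

Lemma basic_cover_sup (S : F -> Prop) : (forall s, S s -> basic_cover s) -> basic_cover (fsup S).
Proof.
  intros H; apply sup_le; intros s Ss; eapply fle_trans; [exact (H s Ss) |].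
  apply sup_le; intros d [Bd Hd]; apply le_sup; split; [exact Bd |].
  eapply fle_trans; [exact Hd | apply le_sup, Ss].
Qed.

Lemma LB0_basic_cover : is_LB0 g -> forall x, basic_cover x.
Proof.
  intros HL; apply (LB0_ind HL basic_cover_top basic_cover_meet basic_cover_sup basic_cover_gen).
Qed.

End Basics.

Section Filters.
Variable L : frame.

Definition is_filter (A : L -> Prop) : Prop :=
  (forall x y, A x -> fle x y -> A y) /\ (forall x y, A x -> A y -> A (fmeet x y)).

Definition is_prime (A : L -> Prop) : Prop := forall x y, A (fjoin x y) -> A x \/ A y.

Variable A : L -> Prop.
Hypothesis A_filter : is_filter A.

Lemma filter_meets l : A ftop -> A (meets l) <-> forall x, In x l -> A x.
Proof.
  destruct A_filter as [Aup Ameet]; intros Atop; induction l as [| x l IH]; simpl.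
  - split; [intros _ _ [] | auto].
  - split.
    + intros Axl y [<- | Hy]; [exact (Aup _ _ Axl (fle_meetl _ _ _)) |].
      apply IH; [exact (Aup _ _ Axl (fle_meetr _ _ _)) | exact Hy].
    + intros H; apply Ameet; [apply H; left; reflexivity |].
      apply IH; intros y Hy; apply H; right; exact Hy.
Qed.

Hypotheses (A_prime : is_prime A) (A_proper : ~ A (fbot L)).

Lemma prime_filter_list_sup (I : Type) (e : I -> L) l :
  A (fsup (fun z => exists i, In i l /\ z = e i)) -> exists i, In i l /\ A (e i).
Proof.
  destruct A_filter as [Aup _]; induction l as [| j l IH]; intros Hl.
  - exfalso; apply A_proper, (Aup _ _ Hl); apply sup_le; intros z [i [[] _]].
  - assert (Hj : A (fjoin (e j) (fsup (fun z => exists i, In i l /\ z = e i)))).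
    { apply (Aup _ _ Hl); apply sup_le; intros z [i [[<- | Hi] ->]]; unfold fjoin.
      - apply le_sup; left; reflexivity.
      - eapply fle_trans; [| apply le_sup; right; reflexivity]; apply le_sup; eauto. }
    destruct (A_prime Hj) as [Aj | Al].
    + exists j; split; [left; reflexivity | exact Aj].
    + destruct (IH Al) as [i [Hi Ai]]; exists i; split; [right; exact Hi | exact Ai].
Qed.

Lemma prime_filter_finite_sup (I : Type) (l : list I) (e : I -> L) :
  (forall i, In i l) -> A (fsup (fun z => exists i, z = e i)) -> exists i, A (e i).
Proof.
  destruct A_filter as [Aup _]; intros Hl HA.
  destruct (prime_filter_list_sup (e := e) (l := l)) as [i [_ Ai]]; [| eauto].
  apply (Aup _ _ HA); apply sup_le; intros z [i ->]; apply le_sup; eauto.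
Qed.

End Filters.

Section PrimeFilterTheorem.
Variables (L : frame) (c v : L).
Hypothesis c_not_le_v : ~ fle c v.

(* The empty set is an avoider, so chains may be empty; the last clause is what forces a
   maximal avoider to contain [c]. *)
Definition avoider (X : L -> Prop) : Prop :=
  is_filter X /\ ~ X v /\ (forall x, X x -> X (fmeet x c)).

Lemma avoider_chain_union (C : (L -> Prop) -> Prop) :
  (forall Y, C Y -> avoider Y) ->
  (forall Y Z, C Y -> C Z -> (forall x, Y x -> Z x) \/ (forall x, Z x -> Y x)) ->
  avoider (fun x => exists2 Y, C Y & Y x).
Proof.
  intros HC Htot; split; [split | split].
  - intros x y [Y CY Yx] Hxy; destruct (HC Y CY) as [[Yup _] _]; exists Y; eauto.
  - intros x y [Y CY Yx] [Z CZ Zy]; destruct (Htot Y Z CY CZ) as [YZ | ZY].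
    + destruct (HC Z CZ) as [[_ Zmeet] _]; exists Z; auto.
    + destruct (HC Y CY) as [[_ Ymeet] _]; exists Y; auto.
  - intros [Y CY Yv]; exact (proj1 (proj2 (HC Y CY)) Yv).
  - intros x [Y CY Yx]; exists Y; [exact CY | exact (proj2 (proj2 (HC Y CY)) x Yx)].
Qed.

Section Maximal.
Variable A : L -> Prop.
Hypothesis A_avoider : avoider A.
Hypothesis A_max : forall B, (forall x, A x -> B x) -> avoider B -> forall x, B x -> A x.

Lemma maximal_avoider_contains_c : A c.
Proof.
  destruct A_avoider as [[Aup Ameet] [Av Ac]].
  apply (A_max (B := fun z => fle c z \/ A z));
    [intros x Ax; right; exact Ax | | left; apply fle_refl].
  split; [split | split].
  - intros x y [Hcx | Ax] Hxy; [left; eapply fle_trans; eauto | right; eauto].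
  - intros x y [Hcx | Ax] [Hcy | Ay].
    + left; apply le_meet; auto.
    + right; apply (Aup (fmeet y c)); [auto |].
      rewrite (meetC x); apply meet_mono; [apply fle_refl | exact Hcx].
    + right; apply (Aup (fmeet x c)); [auto | apply meet_mono; [apply fle_refl | exact Hcy]].
    + right; auto.
  - intros [Hcv | Av']; auto.
  - intros x [Hcx | Ax]; [left; apply le_meet; [exact Hcx | apply fle_refl] | right; auto].
Qed.

(* Otherwise the filter generated by A and w would be a strictly larger avoider. *)
Lemma maximal_avoider_escape w : ~ A w -> exists f, A f /\ fle (fmeet f w) v.
Proof.
  intros Aw; apply NNPP; intros Hno; apply Aw.
  destruct A_avoider as [[Aup Ameet] [Av Ac]].
  apply (A_max (B := fun z => exists f, A f /\ fle (fmeet f w) z)).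
  - intros x Ax; exists x; split; [exact Ax | apply fle_meetl].
  - split; [split | split].
    + intros x y [f [Af Hf]] Hxy; exists f; split; [exact Af | eapply fle_trans; eauto].
    + intros x y [f1 [Af1 H1]] [f2 [Af2 H2]]; exists (fmeet f1 f2); split; [auto |].
      apply le_meet; [eapply fle_trans; [| exact H1] | eapply fle_trans; [| exact H2]];
        apply meet_mono; (apply fle_meetl || apply fle_meetr || apply fle_refl).
    + intros [f [Af Hf]]; apply Hno; eauto.
    + intros x [f [Af Hf]]; exists (fmeet f c); split; [auto |].
      apply le_meet.
      * eapply fle_trans; [| exact Hf]; apply meet_mono; [apply fle_meetl | apply fle_refl].
      * eapply fle_trans; [apply fle_meetl | apply fle_meetr].
  - exists c; split; [exact maximal_avoider_contains_c | apply fle_meetr].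
Qed.

Lemma maximal_avoider_prime : is_prime A.
Proof.
  intros x y Axy; apply NNPP; intros Hn; apply not_or_and in Hn as [Ax Ay].
  destruct (maximal_avoider_escape Ax) as [f1 [Af1 H1]].
  destruct (maximal_avoider_escape Ay) as [f2 [Af2 H2]].
  destruct A_avoider as [[Aup Ameet] [Av _]]; apply Av.
  apply (Aup (fmeet (fmeet f1 f2) (fjoin x y))); [auto |].
  eapply fle_trans; [apply meet_join_le |]; apply sup_le; intros z [-> | ->].
  - eapply fle_trans; [| exact H1]; apply meet_mono; [apply fle_meetl | apply fle_refl].
  - eapply fle_trans; [| exact H2]; apply meet_mono; [apply fle_meetr | apply fle_refl].
Qed.

End Maximal.

Lemma prime_filter_separation : exists A, is_filter A /\ A c /\ ~ A v /\ is_prime A.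
Proof.
  destruct (zorn_sets avoider_chain_union) as [A [HA Amax]].
  exists A; split; [apply HA |]; split; [exact (maximal_avoider_contains_c HA Amax) |].
  split; [apply HA | exact (maximal_avoider_prime HA Amax)].
Qed.

End PrimeFilterTheorem.

Lemma bounded_nat_listing n : exists l : list {i : nat | i < n}, forall i, In i l.
Proof.
  induction n as [| n [l Hl]].
  - exists nil; intros [i Hi]; lia.
  - exists (exist _ n (le_n (S n))
              :: map (fun i => exist _ (proj1_sig i) (le_S _ _ (proj2_sig i))) l).
    intros [i Hi]; destruct (PeanoNat.Nat.eq_dec i n) as [-> | Hne].
    + left; f_equal; apply proof_irrelevance.
    + right; assert (Hi' : i < n) by lia; apply in_map_iff.
      exists (exist _ i Hi'); split; [f_equal; apply proof_irrelevance | apply Hl].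
Qed.

Section PrimeFilterPoints.
Variables (T : monad) (L : frame) (h : T bool -> L).
Hypothesis h_rel : LB0_relations h.

Lemma mapsto_le_map_ret (I A : Type) (t : T I) (f : I -> A) (i : I) :
  fle (h (mapsto t i)) (h (mapsto (bind t (fun j => ret (f j))) (f i))).
Proof.
  destruct h_rel as [_ [R2 R3]]; rewrite R3.
  eapply fle_trans; [| apply le_sup; exists i; reflexivity]; rewrite R2.
  apply le_meet; [apply fle_refl | apply ftop_spec].
Qed.

Variable A : L -> Prop.
Hypotheses (A_filter : is_filter A) (A_prime : is_prime A).
Hypotheses (A_proper : ~ A (fbot L)) (A_top : A ftop).
Hypothesis T_finitary : finitary T.

(* Finitarity reduces the join in the bind relation to a finite one, which a prime filter splits. *)
Lemma prime_filter_bind (X B : Type) (t : T X) (u : X -> T B) (b : B) :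
  A (h (mapsto (bind t u) b)) ->
  exists a, A (h (mapsto t a)) /\ A (h (mapsto (seqm t (u a)) b)).
Proof.
  destruct h_rel as [_ [_ R3]]; pose proof A_filter as [Aup _].
  destruct (T_finitary t) as [n [t' [f ->]]].
  rewrite bind_map_ret, R3; intros Hsup.
  destruct (bounded_nat_listing n) as [l Hl].
  destruct (prime_filter_finite_sup A_filter A_prime A_proper
              (e := fun i => fmeet (h (mapsto t' i)) (h (mapsto (seqm t' (u (f i))) b))) Hl Hsup)
    as [i Ai].
  exists (f i); split.
  - exact (Aup _ _ (Aup _ _ Ai (fle_meetl _ _ _)) (mapsto_le_map_ret t' f i)).
  - unfold seqm; rewrite bind_map_ret; exact (Aup _ _ Ai (fle_meetr _ _ _)).
Qed.

Lemma prime_filter_relations : LB0_relations (L := bool_frame) (fun b => indicator A (h b)).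
Proof.
  destruct h_rel as [R1 [R2 R3]]; pose proof A_filter as [Aup Ameet].
  split; [| split].
  - intros X t a a' Hne; rewrite bool_frame_bot; apply Bool.not_true_iff_false.
    rewrite bool_frame_meet_true, !indicator_true; intros [Ha Ha'].
    apply A_proper; rewrite <- (R1 _ t a a' Hne); auto.
  - intros X B t a; apply indicator_true; rewrite R2; exact A_top.
  - intros X B t u b; apply Bool.eq_iff_eq_true; rewrite bool_frame_sup_true, indicator_true.
    split.
    + intros Hb; destruct (prime_filter_bind Hb) as [a [Ha1 Ha2]]; exists a.
      symmetry; apply bool_frame_meet_true; split; apply indicator_true; assumption.
    + intros [a Ha]; symmetry in Ha; apply bool_frame_meet_true in Ha as [Ha1 Ha2].
      rewrite indicator_true in Ha1, Ha2.
      rewrite R3; apply (Aup _ _ (Ameet _ _ Ha1 Ha2)); apply le_sup; exists a; reflexivity.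
Qed.

End PrimeFilterPoints.

Section Spatiality.
Variables (T : monad) (F : frame) (g : T bool -> F).
Hypotheses (T_finitary : finitary T) (g_LB0 : is_LB0 g).

Lemma point_of_prime_filter (A : F -> Prop) :
  is_filter A -> is_prime A -> ~ A (fbot F) -> A ftop ->
  exists p, is_point p /\ forall l, p (meets (map g l)) = true <-> A (meets (map g l)).
Proof.
  intros Af Ap Abot Atop.
  destruct (proj2 g_LB0 bool_frame _
              (prime_filter_relations (proj1 g_LB0) Af Ap Abot Atop T_finitary))
    as [p [Hp [Hpg _]]].
  pose proof (is_point_of_hom Hp) as Pp.
  assert (Hgen : forall b, p (g b) = true <-> A (g b)).
  { intros b; rewrite Hpg; apply indicator_true. }
  exists p; split; [exact Pp |]; intros l.
  rewrite (point_meets _ Pp), (filter_meets Af _ Atop).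
  split; intros H x Hx; apply in_map_iff in Hx as [b [<- Hb]]; apply Hgen, H, in_map, Hb.
Qed.

Lemma le_of_points (u v : F) : (forall p, is_point p -> p u = true -> p v = true) -> fle u v.
Proof.
  intros Huv; apply NNPP; intros Hnuv.
  assert (Hd : exists l, fle (meets (map g l)) u /\ ~ fle (meets (map g l)) v).
  { apply NNPP; intros Hno; apply Hnuv.
    eapply fle_trans; [exact (LB0_basic_cover g_LB0 u) |].
    apply sup_le; intros d [[l ->] Hdu]; apply NNPP; intros Hdv; apply Hno; eauto. }
  destruct Hd as [l [Hlu Hlv]].
  destruct (prime_filter_separation Hlv) as [A [Af [Al [Av Ap]]]].
  pose proof Af as [Aup _].
  assert (Abot : ~ A (fbot F)) by (intros Abot; exact (Av (Aup _ _ Abot (bot_le _)))).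
  destruct (point_of_prime_filter Af Ap Abot (Aup _ _ Al (ftop_spec _ _))) as [p [Pp Hp]].
  assert (Pv : p v = true) by (apply (Huv p Pp), (point_mono Pp Hlu), Hp, Al).
  apply Av.
  pose proof (point_mono Pp (LB0_basic_cover g_LB0 v) Pv) as Psup.
  apply (proj2 (proj2 Pp)) in Psup as [d [[[k ->] Hdv] Pd]].
  exact (Aup _ _ (proj1 (Hp k) Pd) Hdv).
Qed.

Lemma LB0_spatial : spatial F.
Proof.
  intros u v Huv; apply fle_antisym; apply le_of_points; intros p Pp Hp; apply (Huv p Pp), Hp.
Qed.

End Spatiality.

Lemma LB1_spatial (T : monad) (F : frame) (g : T bool -> F) : spatial F -> spatial (LB1 g).
Proof.
  intros SF.
  apply (spatial_of_hom_family (M := fun _ : T unit => F)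
                               (phi := fun m (w : LB1 g) => proj1_sig w m)).
  - intros m; split; [reflexivity | split; [reflexivity | intros S; reflexivity]].
  - intros w w' H; apply LB1_eq; exact H.
  - intros _; exact SF.
Qed.

Theorem proposition3p18 :
  forall (T : monad), finitary T ->
  forall (F : frame) (g : T bool -> F), is_LB0 g ->
    spatial F /\ spatial (LB1 g).
Proof.
  intros T Hfin F g HL.
  pose proof (LB0_spatial Hfin HL) as SF.
  exact (conj SF (LB1_spatial SF)).
Qed.
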